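(* For every $i\ge2$, the Mycielski graph $G_i$ does not occur as an induced subgraph of the enhanced conflict graph of any traffic pattern in a multicast switch.
   Context: Mycielski graphs: $G_0=K_2$ and $G_{i+1}$ is the Mycielskian of $G_i$ (for a graph $H$ on $v_1,\dots,v_n$, add vertices $w_1,\dots,w_n,z$, join $w_j$ to every neighbor of $v_j$, and join $z$ to all $w_j$). Thus $G_1=C_5$, $G_2$ is the Grötzsch graph, $\omega(G_i)=2$, $\chi(G_i)=i+2$. A flow is $(i,J)$ with input $i$ and nonempty fanout $J$ of outputs; subflows are $(i,J,j)$ with $j\in J$. Enhanced conflict graph: one vertex per subflow; distinct subflows $(i,J,j),(i',J',j')$ adjacent iff $j=j'$, or $i=i'$ and $J\ne J'$. *)

From mathcomp Require Import all_boot.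
Set Implicit Arguments. Unset Strict Implicit. Unset Printing Implicit Defensive.

Fixpoint myc_n (k : nat) : nat :=
  match k with 0 => 2 | k'.+1 => (myc_n k').*2.+1 end.

(* Adjacency of G_k on vertices 0..myc_n k - 1.  In G_{k+1}, with n = myc_n k,
   vertices 0..n-1 are the copies v_j of G_k, n..2n-1 are w_j (w_j = n + j),
   and 2n is z. *)
Fixpoint myc_adj (k : nat) (a b : nat) : bool :=
  match k with
  | 0 => [&& a < 2, b < 2 & a != b]
  | k'.+1 =>
    let n := myc_n k' in
    if (a < n) && (b < n) then myc_adj k' a b
    else if (a < n) && (n <= b < n.*2) then myc_adj k' a (b - n)
    else if (n <= a < n.*2) && (b < n) then myc_adj k' (a - n) b
    else if (a == n.*2) && (n <= b < n.*2) then true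
    else if (n <= a < n.*2) && (b == n.*2) then true
    else false
  end.

Definition mycielski (k : nat) : rel 'I_(myc_n k) :=
  fun a b => myc_adj k a b.

Section Switch.
Variables (In Out : finType).

(* A flow is (i, J) with input i and fanout J; a subflow is (i, J, j). *)
Definition flow := (In * {set Out})%type.
Definition subflow := (In * {set Out} * Out)%type.

Definition traffic_pattern (P : {set flow}) : Prop :=
  forall f, f \in P -> f.2 != set0.

Definition is_subflow (P : {set flow}) (s : subflow) : bool :=
  ((s.1.1, s.1.2) \in P) && (s.2 \in s.1.2).

Definition ecg_adj (s t : subflow) : bool :=
  (s != t) && ((s.2 == t.2) || ((s.1.1 == t.1.1) && (s.1.2 != t.1.2))).

Definition induced_in_ecg (V : finType) (adj : rel V) (P : {set flow}) : Prop :=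
  exists f : V -> subflow,
    [/\ injective f, (forall x, is_subflow P (f x)) &
        (forall x y, x != y -> adj x y = ecg_adj (f x) (f y))].
End Switch.

(* Distinct subflows with the same output are adjacent, and adjacent subflows
   with different outputs share their input but not their fanout.  Let a, b be
   non-adjacent neighbours of z whose outputs differ from z's: then a, b have
   z's input and a common fanout different from z's.  A neighbour u of a that
   is adjacent neither to z nor to b cannot share a's input (it would then have
   z's fanout and be adjacent to b), so it has a's output; hence two such u, v
   would be adjacent.  In the Grötzsch graph G_2 the pairs (w_0, w_1) and
   (w_2, w_4) admit such u, v, so each pair contains a w_j with z's output;
   these two w_j would share an output although they are not adjacent.
   Finally G_2 is an induced subgraph of every G_k with k >= 2. *)
From mathcomp Require Import all_boot.

Set Implicit Arguments.
Unset Strict Implicit.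
Unset Printing Implicit Defensive.

Lemma myc_n_leq_succ k : myc_n k <= myc_n k.+1.
Proof. by rewrite /= -addnn leqW // leq_addr. Qed.

Lemma leq_myc_n m k : m <= k -> myc_n m <= myc_n k.
Proof. exact: homo_leq leqnn leq_trans myc_n_leq_succ m k. Qed.

Lemma myc_adj_succ k a b :
  a < myc_n k -> b < myc_n k -> myc_adj k.+1 a b = myc_adj k a b.
Proof. by move=> ha hb; rewrite /= ha hb. Qed.

Lemma myc_adj_leq m k a b : m <= k ->
  a < myc_n m -> b < myc_n m -> myc_adj k a b = myc_adj m a b.
Proof.
move=> /subnK <-; elim: (k - m) => // d IHd ha hb.
have le_m_dm : myc_n m <= myc_n (d + m) by apply: leq_myc_n; rewrite leq_addl.
rewrite addSn myc_adj_succ ?IHd //; exact: leq_trans le_m_dm.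
Qed.

Section ConflictGraph.
Variables In Out : finType.
Implicit Types (P : {set flow In Out}) (s t z a b u v : subflow In Out).

Lemma induced_in_ecg_mycielski_leq m k P : m <= k ->
  induced_in_ecg (@mycielski k) P -> induced_in_ecg (@mycielski m) P.
Proof.
move=> le_mk [f [f_inj f_sub f_adj]].
have le_n := leq_myc_n le_mk.
have widen_inj : injective (widen_ord le_n).
  by move=> x y /(congr1 val) e; apply: val_inj.
exists (f \o widen_ord le_n); split=> [x y /f_inj /widen_inj //|x|x y nxy].
  exact: f_sub.
rewrite /= -f_adj; last by rewrite (inj_eq widen_inj).
by rewrite /mycielski /= (myc_adj_leq le_mk).
Qed.

Lemma ecg_adj_same_output s t : s != t -> s.2 = t.2 -> ecg_adj s t.
Proof. by rewrite /ecg_adj => -> ->; rewrite eqxx. Qed.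

Lemma ecg_nonadj_input s t : s != t -> ~~ ecg_adj s t ->
  s.1.1 = t.1.1 -> s.1.2 = t.1.2.
Proof.
move=> nst; rewrite /ecg_adj nst negb_or negb_and negbK.
by case/andP=> _ /orP[/eqP ne /ne|/eqP].
Qed.

Lemma ecg_adj_input s t : ecg_adj s t -> s.2 != t.2 ->
  s.1.1 = t.1.1 /\ s.1.2 != t.1.2.
Proof. by case/andP=> _ /orP[/eqP->|/andP[/eqP-> ->]]; rewrite ?eqxx. Qed.

Definition fan_config (T : Type) (adj : rel T) (z a b u v : T) :=
  [&& adj z a, adj z b, ~~ adj a b, adj u a, adj v a,
      ~~ adj u v, ~~ adj u z, ~~ adj v z, ~~ adj u b & ~~ adj v b].

Lemma ecg_fan_config_output z a b u v :
  uniq [:: z; a; b; u; v] -> fan_config (@ecg_adj In Out) z a b u v ->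
  (a.2 == z.2) || (b.2 == z.2).
Proof.
rewrite /= !inE !negb_or => /and5P[/and4P[_ _ zu zv] /andP[ab _] /andP[bu bv] uv _].
case/and5P=> za zb nab ua /and5P[va nuv nuz nvz /andP[nub nvb]].
apply/norP; rewrite ![_.2 == z.2]eq_sym => -[az bz].
have [za_in za_fan] := ecg_adj_input za az.
have [zb_in _] := ecg_adj_input zb bz.
have ab_fan := ecg_nonadj_input ab nab (etrans (esym za_in) zb_in).
have output_of_a w : z != w -> b != w ->
    ecg_adj w a -> ~~ ecg_adj w z -> ~~ ecg_adj w b -> w.2 = a.2.
  move=> zw bw wa nwz nwb; apply/eqP; apply: contraNT nwb => wa2.
  have [wa_in _] := ecg_adj_input wa wa2.
  have wz_fan : w.1.2 = z.1.2.
    by apply: ecg_nonadj_input nwz (etrans wa_in (esym za_in)); rewrite eq_sym.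
  by rewrite /ecg_adj eq_sym bw wa_in -za_in zb_in eqxx wz_fan -ab_fan za_fan orbT.
have uv_out : u.2 = v.2.
  by rewrite (output_of_a u) ?(output_of_a v) // 1?eq_sym.
by move: nuv; rewrite ecg_adj_same_output.
Qed.

Section Embedding.
Variables (V : finType) (adj : rel V) (f : V -> subflow In Out).
Hypotheses (f_inj : injective f)
  (f_adj : forall x y, x != y -> adj x y = ecg_adj (f x) (f y)).

Lemma induced_nonadj_output x y : x != y -> ~~ adj x y -> (f x).2 != (f y).2.
Proof.
move=> nxy; rewrite f_adj //; apply: contraNneq => out_xy.
by apply: ecg_adj_same_output out_xy; rewrite (inj_eq f_inj).
Qed.

Lemma induced_fan_config_output (z a b u v : V) :
  uniq [:: z; a; b; u; v] -> fan_config adj z a b u v ->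
  ((f a).2 == (f z).2) || ((f b).2 == (f z).2).
Proof.
move=> U; have := U; rewrite /= !inE !negb_or.
case/and5P=> /and4P[za zb zu zv] /and3P[ab au av] /andP[bu bv] uv _.
move=> C; apply: (@ecg_fan_config_output _ _ _ (f u) (f v)).
  by rewrite -(map_inj_uniq f_inj) in U.
by move: C; rewrite /fan_config !f_adj // eq_sym.
Qed.

End Embedding.

End ConflictGraph.

Lemma grotzsch_not_induced_in_ecg In Out (P : {set flow In Out}) :
  ~ induced_in_ecg (@mycielski 2) P.
Proof.
case=> f [f_inj _ f_adj].
pose x i : 'I_(myc_n 2) := Ordinal (ltn_pmod i (isT : 0 < myc_n 2)).
have out_z p q : p != q -> ~~ mycielski p q ->
    (f p).2 == (f (x 10)).2 -> (f q).2 != (f (x 10)).2.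
  move=> npq nadj /eqP <-; rewrite eq_sym.
  exact: induced_nonadj_output f_inj f_adj p q npq nadj.
have fan := induced_fan_config_output f_inj f_adj.
case/orP: (fan (x 10) (x 5) (x 6) (x 1) (x 3) isT isT) => [w0 | w1];
case/orP: (fan (x 10) (x 7) (x 9) (x 1) (x 4) isT isT) => [w2 | w4].
- by move: (out_z (x 5) (x 7) isT isT w0); rewrite w2.
- by move: (out_z (x 5) (x 9) isT isT w0); rewrite w4.
- by move: (out_z (x 6) (x 7) isT isT w1); rewrite w2.
- by move: (out_z (x 6) (x 9) isT isT w1); rewrite w4.
Qed.

Theorem corollary2 (k : nat) (Hk : 2 <= k) (In Out : finType)
    (P : {set flow In Out}) :
  traffic_pattern P -> ~ induced_in_ecg (@mycielski k) P.
Proof.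
(* The obstruction does not need nonempty fanouts. *)
move=> _ /(induced_in_ecg_mycielski_leq Hk).
exact: grotzsch_not_induced_in_ecg.
Qed.
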